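(* Let $d$ and $k$ be positive integers. For all sufficiently large $n$, $f(n,n-k,d,2) = n-2d-k+3$.
   Context: All graphs are finite, simple and undirected. The order of a graph is its number of vertices. For a graph $G$ and positive integers $d, r$, let $f_G(d,r)$ be the largest integer $t$ such that in every coloring of the edges of $G$ with $r$ colors there is a monochromatic subgraph (all of its edges of one color) with minimum degree at least $d$ and order at least $t$. For integers $n > K > d$, let $f(n,K,d,r)$ be the minimum of $f_G(d,r)$ over all graphs $G$ with $n$ vertices and minimum degree at least $K$. *)

From mathcomp Require Import all_boot.
Set Implicit Arguments. Unset Strict Implicit. Unset Printing Implicit Defensive.

Section Graphs.
Variable T : finType.

Definition simple_graph (E : {set T * T}) : bool :=
  [forall x, forall y, ((x, y) \in E) == ((y, x) \in E)] &&
  [forall x, (x, x) \notin E].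

Definition deg_in (E : {set T * T}) (S : {set T}) (v : T) : nat :=
  #|[set u in S | (v, u) \in E]|.

Definition mindeg_ge (E : {set T * T}) (K : nat) : bool :=
  [forall v, K <= deg_in E [set: T] v].

Definition edge_coloring (r : nat) (E : {set T * T}) (col : {ffun T * T -> 'I_r}) : bool :=
  [forall x, forall y, ((x, y) \in E) ==> (col (x, y) == col (y, x))].

Definition mono_sub (r : nat) (E : {set T * T}) (col : {ffun T * T -> 'I_r})
  (d : nat) (S : {set T}) (H : {set T * T}) (i : 'I_r) : bool :=
  [&& H \subset E, simple_graph H,
      [forall e in H, [&& e.1 \in S, e.2 \in S & col e == i]] &
      [forall v in S, d <= deg_in H S v]].

Definition good (E : {set T * T}) (d r t : nat) : bool :=
  [forall col : {ffun T * T -> 'I_r}, edge_coloring E col ==>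
     [exists S : {set T}, exists H : {set T * T}, exists i : 'I_r,
        mono_sub E col d S H i && (t <= #|S|)]].

(* f_G(d,r): the largest such t (t = 0 always works via the empty subgraph,
   and t <= |V(G)| necessarily) *)
Definition fG (E : {set T * T}) (d r : nat) : nat :=
  \max_(t < #|T|.+1 | good E d r t) t.

End Graphs.

(* f(n,K,d,r): minimum of f_G(d,r) over graphs G of order n with minimum
   degree >= K; every graph of order n is isomorphic to one on 'I_n.
   (Default value n if no such graph exists, irrelevant when n > K.) *)
Definition f (n K d r : nat) : nat :=
  \big[minn/n]_(E : {set 'I_n * 'I_n} | simple_graph E && mindeg_ge E K) fG E d r.

From mathcomp Require Import all_boot zify.
Set Implicit Arguments. Unset Strict Implicit. Unset Printing Implicit Defensive.

(* Lower bound: in a red/blue colouring of a graph of minimum degree n - k,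
   peel off, for each colour separately, a vertex with fewer than d neighbours
   of that colour among the remaining ones.  If neither peeling stops within
   m = 2d + k - 2 steps, the red-peeled set X and the blue-peeled set Y are
   disjoint by the degree condition, and counting the X-Y edges gives
   m (m - k + 1) <= 2 m (d - 1), which is false.  So one colour has a
   subgraph of minimum degree d on more than n - m vertices.
   Upper bound: on two blocks of p = 2d + k - 3 vertices, a circulant
   colouring gives every vertex of the first block fewer than d red edges and
   every vertex of the second fewer than d blue edges, so any monochromatic
   subgraph of minimum degree d misses a whole block. *)

Lemma leq_card_inj_itv (T : finType) (A : {set T}) (g : T -> nat) a b :
  {in A &, injective g} -> {in A, forall u, a <= g u < b} -> #|A| <= b - a.
Proof.
move=> g_inj g_itv; rewrite cardE -(size_map g) -(size_iota a (b - a)).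
apply: uniq_leq_size => [|_ /mapP[u uA ->]].
  by rewrite map_inj_in_uniq ?enum_uniq // => u v; rewrite !mem_enum; apply: g_inj.
rewrite mem_enum in uA; rewrite mem_iota; have := g_itv u uA; lia.
Qed.

Lemma leq_itv_card n (A : {set 'I_n}) a b :
  b <= n -> (forall u : 'I_n, a <= u < b -> u \in A) -> b - a <= #|A|.
Proof.
move=> bn itv_sub; rewrite cardE -(size_map val) -(size_iota a (b - a)).
apply: uniq_leq_size => [|z]; first exact: iota_uniq.
rewrite mem_iota => z_itv; have zn : z < n by lia.
apply/mapP; exists (Ordinal zn) => //; rewrite mem_enum; apply: itv_sub => /=; lia.
Qed.

Lemma eq_modn_itv p a u v :
  a <= u < a + p -> a <= v < a + p -> u = v %[mod p] -> u = v.
Proof.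
wlog uv : u v / u <= v => [wlog_uv hu hv|hu hv /eqP].
  by case: (leqP u v) => [|/ltnW] ? ?; [apply: wlog_uv | symmetry; apply: wlog_uv].
rewrite eq_sym eqn_mod_dvd // => p_dvd.
case: (posnP (v - u)) => [|vu_pos]; first lia.
have := dvdn_leq vu_pos p_dvd; lia.
Qed.

Lemma sum_card_rel_sym (T : finType) (R : rel T) (X Y : {set T}) :
  symmetric R ->
  \sum_(x in X) #|[set y in Y | R x y]| = \sum_(y in Y) #|[set x in X | R y x]|.
Proof.
move=> R_sym; have card_rel (A : {set T}) z : #|[set u in A | R z u]| = \sum_(u in A) R z u.
  rewrite -sum1_card (eq_bigl (fun u => (u \in A) && R z u)) => [|u]; last by rewrite inE.
  by rewrite big_mkcondr; apply: eq_bigr => u _; case: (R z u).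
rewrite (eq_bigr _ (fun x _ => card_rel Y x)) [RHS](eq_bigr _ (fun y _ => card_rel X y)).
by rewrite exchange_big; apply: eq_bigr => y _; apply: eq_bigr => x _; rewrite R_sym.
Qed.

Lemma ord2_cases (c : 'I_2) : (c == ord0) || (c == ord_max).
Proof. by case: c => [[|[|]]]. Qed.

Lemma bigmin_leq (I : finType) (P : pred I) (F : I -> nat) x0 i :
  P i -> \big[minn/x0]_(j | P j) F j <= F i.
Proof.
move=> Pi; have : i \in index_enum I by rewrite mem_index_enum.
elim: (index_enum I) => [|j r IHr] //; rewrite inE big_cons.
case/orP => [/eqP <- | ir]; first by rewrite Pi geq_minl.
by case: (P j); [apply: leq_trans (geq_minr _ _) (IHr ir) | apply: IHr].
Qed.

Lemma leq_fG (T : finType) (E : {set T * T}) d r t :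
  t <= #|T| -> good E d r t -> t <= fG E d r.
Proof.
move=> tT t_good; have t_lt : t < #|T|.+1 by [].
exact: (leq_bigmax_cond (F := fun s : 'I_#|T|.+1 => nat_of_ord s) (Ordinal t_lt) t_good).
Qed.

Lemma fG_leq (T : finType) (E : {set T * T}) d r (col : {ffun T * T -> 'I_r}) t :
  edge_coloring E col -> (forall S H i, mono_sub E col d S H i -> #|S| <= t) ->
  fG E d r <= t.
Proof.
move=> col_ok small; apply/bigmax_leqP => s /forallP /(_ col) /implyP /(_ col_ok).
case/existsP => S /existsP[H /existsP[i /andP[S_mono]]].
by move/leq_trans; apply; apply: small S_mono.
Qed.

Lemma f_leq n K d r (E : {set 'I_n * 'I_n}) :
  simple_graph E -> mindeg_ge E K -> f n K d r <= fG E d r.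
Proof. by move=> E_simple E_mindeg; apply: bigmin_leq; rewrite E_simple. Qed.

Lemma leq_f n K d r t : t <= n ->
  (forall E : {set 'I_n * 'I_n}, simple_graph E -> mindeg_ge E K -> t <= fG E d r) ->
  t <= f n K d r.
Proof.
move=> tn t_le; apply: (big_ind (fun x => t <= x)) => // [x y | E /andP[]].
  by rewrite leq_min => ->.
exact: t_le.
Qed.

Lemma mono_sub_disjoint (T : finType) (E : {set T * T}) r (col : {ffun T * T -> 'I_r})
    d S H i (A : {set T}) :
  mono_sub E col d S H i ->
  (forall v, v \in A -> #|[set u | ((v, u) \in E) && (col (v, u) == i)]| < d) ->
  [disjoint S & A].
Proof.
case/and4P => H_E _ /forall_inP H_col /forall_inP H_deg A_low.
apply/pred0P => v /=; apply/negP => /andP[vS vA].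
suff : deg_in H S v <= #|[set u | ((v, u) \in E) && (col (v, u) == i)]|.
  by move/(leq_trans (H_deg v vS)); rewrite leqNgt A_low.
apply: subset_leq_card; apply/subsetP => u; rewrite !inE => /andP[_ vu_H].
by rewrite (subsetP H_E _ vu_H); case/and3P: (H_col _ vu_H).
Qed.

Section TwoColouredCores.
Variables (T : finType) (E : {set T * T}) (col : {ffun T * T -> 'I_2}) (d k : nat).
Hypotheses (E_simple : simple_graph E) (col_ok : edge_coloring E col).
Hypothesis E_mindeg : mindeg_ge E (#|T| - k).

Definition colnb c (A : {set T}) x := [set u in A | ((x, u) \in E) && (col (x, u) == c)].

Definition col_core c (S : {set T}) := [forall v in S, d <= #|colnb c S v|].

Definition col_peeled c (X : {set T}) := [forall x in X, #|colnb c (~: X) x| < d].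

Definition col_subgraph c (S : {set T}) : {set T * T} :=
  [set e in E | [&& e.1 \in S, e.2 \in S & col e == c]].

Lemma E_sym x y : ((x, y) \in E) = ((y, x) \in E).
Proof. by case/andP: E_simple => /forallP /(_ x) /forallP /(_ y) /eqP. Qed.

Lemma E_irrefl x : (x, x) \notin E.
Proof. by case/andP: E_simple => _ /forallP. Qed.

Lemma col_sym x y : (x, y) \in E -> col (x, y) = col (y, x).
Proof. by move: col_ok => /forallP /(_ x) /forallP /(_ y) /implyP H /H /eqP. Qed.

Lemma col_adj_sym c : symmetric (fun x y => ((x, y) \in E) && (col (x, y) == c)).
Proof. by move=> x y /=; case Exy: ((x, y) \in E); rewrite -E_sym Exy //= (col_sym Exy). Qed.

Lemma mindeg_at x : #|T| - k <= #|[set u | (x, u) \in E]|.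
Proof.
move/forallP: E_mindeg => /(_ x); rewrite /deg_in.
by under eq_finset => u do rewrite inE.
Qed.

Lemma card_nonadj x : #|~: [set u | (x, u) \in E]| <= k.
Proof. by rewrite -(leq_add2l #|[set u | (x, u) \in E]|) cardsC addnC -leq_subLR mindeg_at. Qed.

Lemma colnbS c (A B : {set T}) x : A \subset B -> colnb c A x \subset colnb c B x.
Proof.
move=> AB; apply/subsetP => u; rewrite !inE => /andP[uA ->].
by rewrite (subsetP AB).
Qed.

Lemma col_core_mono_sub c S : col_core c S -> mono_sub E col d S (col_subgraph c S) c.
Proof.
move=> S_core; apply/and4P; split.
- by apply/subsetP => e; rewrite inE => /andP[].
- apply/andP; split; last by apply/forallP => x; rewrite inE negb_and E_irrefl.
  apply/forallP => x; apply/forallP => y; rewrite !inE /= (E_sym y x).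
  case Exy: ((x, y) \in E) => //=; rewrite (col_sym Exy).
  by case: (x \in S); case: (y \in S).
- by apply/forall_inP => e; rewrite inE => /andP[].
- apply/forall_inP => v vS; rewrite /deg_in.
  suff -> : [set u in S | (v, u) \in col_subgraph c S] = colnb c S v by apply: (forall_inP S_core).
  by apply/setP => u; rewrite !inE /= vS; case: (u \in S).
Qed.

Lemma col_core_or_peeled c j :
  (exists S : {set T}, col_core c S /\ #|T| < #|S| + j) \/
  (exists X : {set T}, #|X| = j /\ col_peeled c X).
Proof.
elim: j => [|j [[S [S_core S_large]] | [X [X_card X_peeled]]]].
- by right; exists set0; rewrite cards0; split=> //; apply/forall_inP => x; rewrite inE.
- by left; exists S; split=> //; lia.
have [CX_core | ] := boolP (col_core c (~: X)).
  by left; exists (~: X); split=> //; have := cardsC X; lia.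
rewrite negb_forall_in => /existsP[v /andP[vCX]]; rewrite -ltnNge => v_low.
right; exists (v |: X); split; first by rewrite cardsU1 -in_setC vCX X_card.
have CvX_sub : ~: (v |: X) \subset ~: X by rewrite setCS subsetUr.
apply/forall_inP => x; rewrite !inE => /orP[/eqP -> | xX].
  exact: leq_ltn_trans (subset_leq_card (colnbS c v CvX_sub)) v_low.
move/forall_inP: X_peeled => /(_ x xX).
exact: leq_ltn_trans (subset_leq_card (colnbS c x CvX_sub)).
Qed.

Section Peeled.
Variables (X Y : {set T}).
Hypotheses (X_peeled : col_peeled ord0 X) (Y_peeled : col_peeled ord_max Y).

Lemma col_peeled_disjoint : #|X| + #|Y| + 2 * d + k <= #|T| -> [disjoint X & Y].
Proof.
move=> large; apply/pred0P => x /=; apply/negP => /andP[xX xY].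
have x_red := forall_inP X_peeled x xX; have x_blue := forall_inP Y_peeled x xY.
have N_sub : [set u | (x, u) \in E] \subset
    (X :|: Y) :|: (colnb ord0 (~: X) x :|: colnb ord_max (~: Y) x).
  apply/subsetP => u; rewrite !inE => Exu.
  by case: (u \in X); case: (u \in Y); rewrite //= Exu ord2_cases.
have := leq_trans (mindeg_at x) (subset_leq_card N_sub).
have := leq_of_leqif (leq_card_setU (X :|: Y) (colnb ord0 (~: X) x :|: colnb ord_max (~: Y) x)).
have := leq_of_leqif (leq_card_setU X Y).
have := leq_of_leqif (leq_card_setU (colnb ord0 (~: X) x) (colnb ord_max (~: Y) x)).
lia.
Qed.

Hypothesis XY_disj : [disjoint X & Y].

Lemma X_subCY : X \subset ~: Y.
Proof. by rewrite -disjoints_subset. Qed.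

Lemma Y_subCX : Y \subset ~: X.
Proof. by rewrite -disjoints_subset disjoint_sym. Qed.

Lemma red_into_peeled x : x \in X -> #|colnb ord0 Y x| <= d - 1.
Proof.
move=> xX; have := subset_leq_card (colnbS ord0 x Y_subCX).
have := forall_inP X_peeled x xX; lia.
Qed.

Lemma blue_into_peeled y : y \in Y -> #|colnb ord_max X y| <= d - 1.
Proof.
move=> yY; have := subset_leq_card (colnbS ord_max y X_subCY).
have := forall_inP Y_peeled y yY; lia.
Qed.

Lemma adj_into_peeled x : x \in X ->
  #|Y| - (k - 1) <= #|colnb ord0 Y x| + #|colnb ord_max Y x|.
Proof.
move=> xX; have := card_nonadj x; set N := [set u | (x, u) \in E] => N_small.
have xCN : x \in ~: N by rewrite !inE E_irrefl.
have Y_nonadj : Y :\: N \subset ~: N :\ x.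
  apply/subsetP => u; rewrite !inE => /andP[uN uY]; rewrite uN andbT.
  by apply: contraTneq uY => ->; rewrite -in_setC (subsetP X_subCY).
have Y_adj : Y :&: N \subset colnb ord0 Y x :|: colnb ord_max Y x.
  by apply/subsetP => u; rewrite !inE => /andP[-> ->]; rewrite ord2_cases.
have := subset_leq_card Y_nonadj; have := subset_leq_card Y_adj.
have := leq_of_leqif (leq_card_setU (colnb ord0 Y x) (colnb ord_max Y x)).
have := cardsID N Y; have := cardsD1 x (~: N); rewrite xCN /=; lia.
Qed.

(* Red edges from X into Y are few because Y lies outside X; blue ones are few
   on average because, counted from Y, they leave Y. *)
Lemma col_peeled_count : #|X| * (#|Y| - (k - 1)) <= (#|X| + #|Y|) * (d - 1).
Proof.
have red_sum : \sum_(x in X) #|colnb ord0 Y x| <= #|X| * (d - 1).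
  by rewrite -sum_nat_const; apply: leq_sum => x /red_into_peeled.
have blue_sum : \sum_(x in X) #|colnb ord_max Y x| <= #|Y| * (d - 1).
  rewrite (sum_card_rel_sym _ _ (col_adj_sym _)) -sum_nat_const.
  by apply: leq_sum => y /blue_into_peeled.
rewrite mulnDl -sum_nat_const; apply: leq_trans (leq_add red_sum blue_sum).
by rewrite -big_split; apply: leq_sum => x /adj_into_peeled.
Qed.

End Peeled.

Lemma col_core_large : 0 < d -> 0 < k -> 6 * d + 3 * k <= #|T| ->
  exists c S, col_core c S /\ #|T| - 2 * d - k + 3 <= #|S|.
Proof.
move=> d_gt0 k_gt0 T_large; set m := 2 * d + k - 2.
have core_large c S : col_core c S -> #|T| < #|S| + m ->
    exists c S, col_core c S /\ #|T| - 2 * d - k + 3 <= #|S|.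
  by move=> S_core S_large; exists c, S; split=> //; lia.
have [[S [S_core S_large]] | [X [X_card X_peeled]]] := col_core_or_peeled ord0 m.
  exact: core_large S_core S_large.
have [[S [S_core S_large]] | [Y [Y_card Y_peeled]]] := col_core_or_peeled ord_max m.
  exact: core_large S_core S_large.
have XY_disj : [disjoint X & Y] by apply: col_peeled_disjoint => //; lia.
have := col_peeled_count X_peeled Y_peeled XY_disj; rewrite X_card Y_card.
have -> : m - (k - 1) = (2 * d - 2).+1 by lia.
have -> : m + m = m * 2 by lia.
by rewrite -mulnA ltn_geF // ltn_pmul2l; lia.
Qed.

End TwoColouredCores.

Lemma good_two_coloured (T : finType) (E : {set T * T}) d k :
  0 < d -> 0 < k -> 6 * d + 3 * k <= #|T| ->
  simple_graph E -> mindeg_ge E (#|T| - k) -> good E d 2 (#|T| - 2 * d - k + 3).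
Proof.
move=> d_gt0 k_gt0 T_large E_simple E_mindeg.
apply/forallP => col; apply/implyP => col_ok.
have [c [S [S_core S_large]]] := col_core_large E_simple col_ok E_mindeg d_gt0 k_gt0 T_large.
apply/existsP; exists S; apply/existsP; exists (col_subgraph E col c S).
by apply/existsP; exists c; rewrite col_core_mono_sub.
Qed.

(* The extremal colouring lives on A = [0, p) and B = [p, 2p).  A pair a, b
   with a in A and b in B gets the residue (b - a) mod p: it is a non-edge
   when the residue is < k - 1, red when it is < k + d - 2, blue otherwise.
   Other edges are blue when they meet A and red otherwise, so that every
   vertex of A has at most d - 1 red edges and every vertex of B at most
   p - (k + d - 2) <= d - 1 blue ones. *)
Definition cross_residue p (u v : nat) : option nat :=
  if (u < p) && (p <= v < p + p) then Some ((v - u) %% p)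
  else if (v < p) && (p <= u < p + p) then Some ((u - v) %% p) else None.

Definition circ_edge p k (u v : nat) :=
  (u != v) && (if cross_residue p u v is Some r then k - 1 <= r else true).

Definition circ_red p k d (u v : nat) :=
  if cross_residue p u v is Some r then r < k + d - 2 else (p <= u) && (p <= v).

Lemma cross_residue_sym p u v : cross_residue p u v = cross_residue p v u.
Proof.
rewrite /cross_residue.
by case: ifP => [/and3P[? ? ?]|_]; case: ifP => // /and3P[? ? ?]; lia.
Qed.

Lemma circ_edge_sym p k u v : circ_edge p k u v = circ_edge p k v u.
Proof. by rewrite /circ_edge cross_residue_sym eq_sym. Qed.

Lemma circ_red_sym p k d u v : circ_red p k d u v = circ_red p k d v u.
Proof. by rewrite /circ_red cross_residue_sym andbC. Qed.

Lemma cross_residue_inj_r p x y1 y2 : x < p ->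
  p <= y1 < p + p -> p <= y2 < p + p -> y1 - x = y2 - x %[mod p] -> y1 = y2.
Proof.
move=> xA y1B y2B eq_res; apply: (eq_modn_itv y1B y2B).
have [x_le1 x_le2] : x <= y1 /\ x <= y2 by lia.
by rewrite -(subnK x_le1) -(subnK x_le2) -modnDml eq_res modnDml.
Qed.

Lemma cross_residue_inj_l p x1 x2 y : x1 < p -> x2 < p ->
  p <= y < p + p -> y - x1 = y - x2 %[mod p] -> x1 = x2.
Proof.
move=> x1A x2A yB eq_res; apply: (@eq_modn_itv p 0) => //.
have [x1_le x2_le] : x1 <= y /\ x2 <= y by lia.
have : y - x1 + (x1 + x2) = y - x2 + (x1 + x2) %[mod p] by rewrite -modnDml eq_res modnDml.
rewrite addnA subnK // [x1 + x2]addnC addnA subnK // => /eqP.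
by rewrite eqn_modDl eq_sym => /eqP.
Qed.

Lemma circ_red_from_A p k d x u : x < p -> circ_edge p k x u -> circ_red p k d x u ->
  [/\ p <= u < p + p, k - 1 <= (u - x) %% p & (u - x) %% p < k + d - 2].
Proof.
move=> xA; rewrite /circ_edge /circ_red /cross_residue xA /=.
case: ifP => [uB /andP[_ res_ge] res_lt | _]; first by split.
by case: ifP => [/and3P[_ ? _] | _ _ /andP[]]; [lia | rewrite leqNgt xA].
Qed.

Lemma circ_blue_from_B p k d y u : p <= y < p + p ->
  circ_edge p k y u -> ~~ circ_red p k d y u ->
  [/\ u < p, k + d - 2 <= (y - u) %% p & (y - u) %% p < p].
Proof.
move=> yB; have yA : (y < p) = false by lia.
rewrite /circ_edge /circ_red /cross_residue yA /=.
case: ifP => [/and3P[uA _ _] _ | uyA _]; first by rewrite -leqNgt ltn_mod; split; lia.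
move: uyA; rewrite yB andbT => /negbT; rewrite -leqNgt => pu.
by case/andP: yB => py _; rewrite py pu.
Qed.

Lemma circ_nonadj p k u v : u != v -> ~~ circ_edge p k u v ->
  if u < p then (p <= v < p + p) && ((v - u) %% p < k - 1)
  else [&& v < p, p <= u < p + p & (u - v) %% p < k - 1].
Proof.
rewrite /circ_edge /cross_residue => -> /=.
case: ifP => [/andP[uA vB] | uvA]; first by rewrite uA vB -ltnNge.
case: ifP => [/andP[vA uB] | //]; rewrite -ltnNge => res_lt.
by case: ifP => uA; [lia | rewrite vA uB res_lt].
Qed.

Section Circulant.
Variables (n d k p : nat).

Definition circ_graph : {set 'I_n * 'I_n} := [set e : 'I_n * 'I_n | circ_edge p k e.1 e.2].

Definition circ_col : {ffun 'I_n * 'I_n -> 'I_2} :=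
  [ffun e : 'I_n * 'I_n => if circ_red p k d e.1 e.2 then ord0 else ord_max].

Lemma circ_graph_simple : simple_graph circ_graph.
Proof.
apply/andP; split; first by apply/forallP => x; apply/forallP => y; rewrite !inE circ_edge_sym.
by apply/forallP => x; rewrite inE /circ_edge eqxx.
Qed.

Lemma circ_col_ok : edge_coloring circ_graph circ_col.
Proof.
by apply/forallP => x; apply/forallP => y; apply/implyP => _; rewrite !ffunE circ_red_sym.
Qed.

Lemma circ_graph_mindeg : 0 < k -> mindeg_ge circ_graph (n - k).
Proof.
move=> k_gt0; apply/forallP => u; rewrite /deg_in.
set N := [set v in [set: 'I_n] | (u, v) \in circ_graph].
set B : {set 'I_n} := [set v : 'I_n | (u != v :> nat) && ~~ circ_edge p k u v].
have CN_sub : ~: N \subset u |: B.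
  apply/subsetP => v; rewrite !inE /=.
  by case: (eqVneq v u) => //= vu; rewrite eq_sym vu.
have B_small : #|B| <= k - 1 - 0.
  pose res v := if u < p then (v - u) %% p else (u - v) %% p.
  apply: (@leq_card_inj_itv _ _ (fun v : 'I_n => res v)) => [v1 v2 | v].
    rewrite /B !inE /res => /andP[uv1 /(circ_nonadj uv1) nadj1].
    move=> /andP[uv2 /(circ_nonadj uv2) nadj2]; move: nadj1 nadj2.
    case: ifP => uA.
      case/andP=> v1B _ /andP[v2B _] eq_res.
      by apply/val_inj; apply: (cross_residue_inj_r uA v1B v2B eq_res).
    case/and3P=> v1A uB _ /and3P[v2A _ _] eq_res.
    by apply/val_inj; apply: (cross_residue_inj_l v1A v2A uB eq_res).
  rewrite /B inE /res => /andP[uv /(circ_nonadj uv)].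
  by case: ifP => _; [case/andP | case/and3P].
have uB : u \notin B by rewrite inE eqxx.
rewrite leq_subLR -{1}(card_ord n) -(cardsC N) addnC leq_add2r.
by apply: leq_trans (subset_leq_card CN_sub) _; rewrite cardsU1 uB; lia.
Qed.

Lemma circ_col_red x y : (circ_col (x, y) == ord0) = circ_red p k d x y.
Proof. by rewrite ffunE /=; case: ifP. Qed.

Lemma circ_col_blue x y : (circ_col (x, y) == ord_max) = ~~ circ_red p k d x y.
Proof. by rewrite ffunE /=; case: ifP. Qed.

Lemma circ_red_deg (x : 'I_n) : 0 < d -> x < p ->
  #|[set u | ((x, u) \in circ_graph) && (circ_col (x, u) == ord0)]| < d.
Proof.
move=> d_gt0 xA; apply: leq_ltn_trans (_ : _ <= k + d - 2 - (k - 1)) _; last by lia.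
apply: (@leq_card_inj_itv _ _ (fun u : 'I_n => (u - x) %% p)) => [u1 u2 | u].
  rewrite !inE !circ_col_red => /andP[e1 r1] /andP[e2 r2] eq_res.
  have [u1B _ _] := circ_red_from_A xA e1 r1; have [u2B _ _] := circ_red_from_A xA e2 r2.
  by apply/val_inj; apply: (cross_residue_inj_r xA u1B u2B eq_res).
by rewrite !inE circ_col_red => /andP[e r]; have [_ -> ->] := circ_red_from_A xA e r.
Qed.

Lemma circ_blue_deg (y : 'I_n) : 0 < d -> p <= 2 * d + k - 3 -> p <= y < p + p ->
  #|[set u | ((y, u) \in circ_graph) && (circ_col (y, u) == ord_max)]| < d.
Proof.
move=> d_gt0 p_le yB; apply: leq_ltn_trans (_ : _ <= p - (k + d - 2)) _; last by lia.
apply: (@leq_card_inj_itv _ _ (fun u : 'I_n => (y - u) %% p)) => [u1 u2 | u].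
  rewrite !inE !circ_col_blue => /andP[e1 b1] /andP[e2 b2] eq_res.
  have [u1A _ _] := circ_blue_from_B yB e1 b1; have [u2A _ _] := circ_blue_from_B yB e2 b2.
  by apply/val_inj; apply: (cross_residue_inj_l u1A u2A yB eq_res).
by rewrite !inE circ_col_blue => /andP[e b]; have [_ -> ->] := circ_blue_from_B yB e b.
Qed.

Lemma circ_mono_sub_small S H i : 0 < d -> p <= 2 * d + k - 3 -> p + p <= n ->
  mono_sub circ_graph circ_col d S H i -> #|S| <= n - p.
Proof.
move=> d_gt0 p_le pn.
have avoid_itv c a : mono_sub circ_graph circ_col d S H c -> a + p <= n ->
    (forall u : 'I_n, a <= u < a + p ->
       #|[set v | ((u, v) \in circ_graph) && (circ_col (u, v) == c)]| < d) ->
    #|S| <= n - p.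
  move=> S_mono apn low; set I := [set u : 'I_n | a <= u < a + p].
  have S_CI : S \subset ~: I.
    by rewrite -disjoints_subset (mono_sub_disjoint S_mono) // => u; rewrite inE; apply: low.
  have : a + p - a <= #|I| by apply: leq_itv_card => // u; rewrite inE.
  have := subset_leq_card S_CI; have := cardsC I; rewrite card_ord; lia.
have /orP[/eqP-> | /eqP->] := ord2_cases i => S_mono.
  by apply: (avoid_itv _ 0 S_mono) => [|u /andP[_ uA]]; [lia | apply: circ_red_deg].
by apply: (avoid_itv _ p S_mono) => // u uB; apply: circ_blue_deg.
Qed.

End Circulant.

Theorem theorem1p3 (d k : nat) : 0 < d -> 0 < k ->
  exists N : nat, forall n : nat, N <= n ->
    f n (n - k) d 2 = n - 2 * d - k + 3.
Proof.
move=> d_gt0 k_gt0; exists (6 * d + 3 * k) => n n_large.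
apply/eqP; rewrite eqn_leq; apply/andP; split.
- set p := 2 * d + k - 3.
  apply: leq_trans (f_leq _ _ (circ_graph_simple n k p) (circ_graph_mindeg n p k_gt0)) _.
  apply: (fG_leq (circ_col_ok n d k p)) => S H i /circ_mono_sub_small.
  by rewrite /p; lia.
- apply: leq_f => [|E E_simple E_mindeg]; first lia.
  apply: leq_fG; first by rewrite card_ord; lia.
  by have := @good_two_coloured _ E d k; rewrite card_ord; apply.
Qed.
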